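(* Let $\alpha\in\mathbb{R}$, let $p$ be a positive integer, $a\in\mathbb{R}$, and let $f$ be defined only on $\mathbb{N}_a$. Then for all $t\in\mathbb{N}_{a+2p-1}$, $$\nabla_{a+p-1}^{-\alpha}\nabla^p f(t)=\nabla^p\nabla_{a+p-1}^{-\alpha}f(t)-\sum_{k=0}^{p-1}\frac{(t-(a+p-1))^{\overline{\alpha-p+k}}}{\Gamma(\alpha+k-p+1)}\nabla^k f(a+p-1).$$
   Context: Notation: $\mathbb{N}_c=\{c,c+1,\dots\}$, $\rho(t)=t-1$, $\nabla g(t)=g(t)-g(t-1)$, $\nabla^m=\nabla(\nabla^{m-1})$. Rising factorial: $t^{\overline{\beta}}=\Gamma(t+\beta)/\Gamma(t)$ with $0^{\overline{\beta}}=0$; the reciprocal of $\Gamma$ at a pole is $0$. For $\gamma>0$ and starting point $c$, the nabla left fractional sum is $\nabla_c^{-\gamma}g(t)=\frac{1}{\Gamma(\gamma)}\sum_{s=c+1}^{t}(t-\rho(s))^{\overline{\gamma-1}}g(s)$, a sum with upper limit smaller than lower limit being $0$. For $\beta>0$ let $n=[\beta]+1$ with $[\beta]$ the greatest integer strictly less than $\beta$; the nabla left fractional difference is $\nabla_c^{\beta}g(t)=\nabla^n\nabla_c^{-(n-\beta)}g(t)$ (order-$0$ operator = identity). For $\alpha<0$, $\nabla_c^{-\alpha}$ denotes the nabla left fractional difference of order $-\alpha$; for $\alpha=0$ the identity. *)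

From Stdlib Require Import Reals Lra Lia ZArith Arith List ClassicalEpsilon.
Open Scope R_scope.

(** Reciprocal Gamma function 1/Γ, via Gauss's product formula
    Γ(x) = lim_{N->oo} N! N^x / (x (x+1) ... (x+N)),
    i.e. 1/Γ(x) = lim_{N->oo} x (x+1) ... (x+N) / (N! N^x)   (N >= 1).
    This limit exists for every real x (1/Γ is entire) and is 0 exactly at
    the poles 0,-1,-2,... of Γ, matching the convention "1/Γ(pole) = 0". *)
Definition gauss_rgamma_seq (x : R) (n : nat) : R :=
  prod_f_R0 (fun j => x + INR j) (S n) / (INR (fact (S n)) * Rpower (INR (S n)) x).

Definition rgamma (x : R) : R :=
  epsilon (inhabits 0) (fun l => Un_cv (gauss_rgamma_seq x) l).

(** Rising factorial t^{(β)} = Γ(t+β)/Γ(t) = (1/Γ(t)) / (1/Γ(t+β)),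
    with 0^{(β)} = 0.  (In Stdlib, / 0 = 0.) *)
Definition rising (t beta : R) : R :=
  if Req_EM_T t 0 then 0 else rgamma t / rgamma (t + beta).

Fixpoint rsum (n : nat) (F : nat -> R) : R :=
  match n with
  | O => 0
  | S m => rsum m F + F (S m)
  end.

Definition nabla (g : R -> R) (t : R) : R := g t - g (t - 1).

Fixpoint nabla_pow (m : nat) (g : R -> R) : R -> R :=
  match m with
  | O => g
  | S k => nabla (nabla_pow k g)
  end.

(** Number of lattice points s in c+1, c+2, ... with s <= t
    (= t - c for t in N_c, 0 if t < c+1). *)
Definition npoints (c t : R) : nat := Z.to_nat (Int_part (t - c)).

(** Nabla left fractional sum of order γ > 0 with starting point c:
    ∇_c^{-γ} g(t) = 1/Γ(γ) Σ_{s=c+1}^{t} (t - ρ(s))^{(γ-1)} g(s). *)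
Definition nabla_frac_sum (c gamma : R) (g : R -> R) (t : R) : R :=
  rgamma gamma *
  rsum (npoints c t)
       (fun j => rising (t - (c + INR j - 1)) (gamma - 1) * g (c + INR j)).

Definition nabla_frac_sum0 (c gamma : R) (g : R -> R) : R -> R :=
  if Req_EM_T gamma 0 then g else nabla_frac_sum c gamma g.

(** [β] = the greatest integer strictly less than β  (= - up(-β)). *)
Definition greatest_int_lt (beta : R) : Z := (- up (- beta))%Z.

Definition nabla_frac_diff (c beta : R) (g : R -> R) : R -> R :=
  let n := Z.to_nat (greatest_int_lt beta + 1) in
  nabla_pow n (nabla_frac_sum0 c (INR n - beta) g).

(** The operator written ∇_c^{-α} in the paper, for any real α:
    α > 0: fractional sum of order α; α = 0: identity;
    α < 0: fractional difference of order -α. *)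
Definition nabla_left (c alpha : R) (g : R -> R) : R -> R :=
  match Rlt_dec 0 alpha with
  | left _ => nabla_frac_sum c alpha g
  | right _ =>
      if Req_EM_T alpha 0 then g else nabla_frac_diff c (- alpha) g
  end.

(** Write c = a + p - 1 and t = c + z with z >= p an integer.

    - 1/Γ is the limit of Gauss's product; the limit exists everywhere
      (monotone convergence for x >= 0, then a shift argument) and satisfies
      1/Γ(x) = x · 1/Γ(x+1), hence vanishes at 0, -1, -2, ...  This gives the
      power rule ∇ (t-c)^{(β)} = β (t-c)^{(β-1)} and its iterates.
    - Summation by parts yields, for γ > 0,
        ∇_c^{-γ} ∇f(t) = ∇ ∇_c^{-γ} f(t) - (t-c)^{(γ-1)}/Γ(γ) · f(c),
      and induction on p, with the power rule applied to the boundary terms,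
      proves the theorem for fractional sums ([frac_sum_commute]).
    - A fractional difference of order β > 0 is ∇^n ∇_c^{-ν} with ν = n - β in
      [0, 1).  If ν = 0 it is ∇^n, which commutes with ∇^p, and the correction
      term vanishes since each 1/Γ is taken at a pole; otherwise ν is not an
      integer and ∇^n applied to the fractional-sum identity lowers the order of
      every correction term by n ([frac_diff_commute]).
    - Order 0 is the identity, and again the correction term vanishes.
    The main theorem only translates the lattice hypothesis on t. *)

From Stdlib Require Import Reals Lra Lia ZArith ClassicalEpsilon.
From Coquelicot Require Import Coquelicot.
Open Scope R_scope.

Lemma pochhammer_shift (x : R) (k : nat) :
  prod_f_R0 (fun j => x + INR j) (S k) = x * prod_f_R0 (fun j => x + 1 + INR j) k.
Proof.
  induction k as [|k IHk]; [simpl; ring|].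
  change (prod_f_R0 (fun j => x + INR j) (S (S k)) =
          x * (prod_f_R0 (fun j => x + 1 + INR j) k * (x + 1 + INR (S k)))).
  change (prod_f_R0 (fun j => x + INR j) (S (S k)))
    with (prod_f_R0 (fun j => x + INR j) (S k) * (x + INR (S (S k)))).
  rewrite IHk, !S_INR. ring.
Qed.

Lemma pochhammer_nonneg (x : R) (k : nat) :
  0 <= x -> 0 <= prod_f_R0 (fun j => x + INR j) k.
Proof.
  intros Hx. induction k as [|k IHk]; [simpl; lra|].
  change (0 <= prod_f_R0 (fun j => x + INR j) k * (x + INR (S k))).
  apply Rmult_le_pos; [exact IHk|]. pose proof (pos_INR (S k)). lra.
Qed.

Lemma Rpower_pos (y x : R) : 0 < Rpower y x.
Proof. apply exp_pos. Qed.

Lemma INR_fact_pos (n : nat) : 0 < INR (fact n).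
Proof. apply lt_0_INR, lt_O_fact. Qed.

Lemma gauss_seq_nonneg (x : R) (n : nat) : 0 <= x -> 0 <= gauss_rgamma_seq x n.
Proof.
  intros Hx. unfold gauss_rgamma_seq.
  apply Rmult_le_pos; [now apply pochhammer_nonneg|].
  left. apply Rinv_0_lt_compat, Rmult_lt_0_compat; [apply INR_fact_pos|apply Rpower_pos].
Qed.

(** The Gauss sequences at x and at x + 1 are related by a factor tending
    to x; in the limit this is the recurrence 1/Γ(x) = x / Γ(x+1). *)
Lemma gauss_seq_shift (x : R) (n : nat) :
  gauss_rgamma_seq x n * (x + INR n + 2) = x * gauss_rgamma_seq (x + 1) n * (INR n + 1).
Proof.
  unfold gauss_rgamma_seq. rewrite pochhammer_shift.
  change (prod_f_R0 (fun j => x + 1 + INR j) (S n))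
    with (prod_f_R0 (fun j => x + 1 + INR j) n * (x + 1 + INR (S n))).
  rewrite Rpower_plus, Rpower_1 by (apply lt_0_INR; lia).
  pose proof (INR_fact_pos (S n)). pose proof (Rpower_pos (INR (S n)) x).
  assert (0 < INR (S n)) by (apply lt_0_INR; lia).
  rewrite S_INR in *. field. split; lra.
Qed.

Lemma gauss_seq_succ (x : R) (n : nat) :
  gauss_rgamma_seq x (S n) * ((INR n + 2) * Rpower (INR n + 2) x) =
  gauss_rgamma_seq x n * ((x + INR n + 2) * Rpower (INR n + 1) x).
Proof.
  unfold gauss_rgamma_seq.
  change (prod_f_R0 (fun j => x + INR j) (S (S n)))
    with (prod_f_R0 (fun j => x + INR j) (S n) * (x + INR (S (S n)))).
  rewrite fact_simpl, mult_INR, !S_INR.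
  pose proof (INR_fact_pos (S n)). pose proof (pos_INR n).
  pose proof (Rpower_pos (INR n + 1 + 1) x). pose proof (Rpower_pos (INR n + 1) x).
  replace (INR n + 1 + 1) with (INR n + 2) in * by ring.
  field. repeat split; lra.
Qed.

(** A Bernoulli-type inequality (x + a + 1) a^x <= (a + 1) (a + 1)^x for
    a > 0 and x >= 0; it makes the Gauss sequence nonincreasing. *)
Lemma rpower_succ_bound (a x : R) :
  0 < a -> 0 <= x -> (x + a + 1) * Rpower a x <= (a + 1) * Rpower (a + 1) x.
Proof.
  intros Ha Hx.
  assert (Hlog : 1 / (a + 1) <= ln (a + 1) - ln a).
  { pose proof (exp_ineq1_le (ln (a / (a + 1)))) as H.
    rewrite exp_ln in H by (apply Rdiv_lt_0_compat; lra).
    rewrite ln_div in H by lra.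
    replace (a / (a + 1)) with (1 - 1 / (a + 1)) in H by (field; lra). lra. }
  assert (Hexp : 1 + x / (a + 1) <= exp (x * (ln (a + 1) - ln a))).
  { eapply Rle_trans; [|apply exp_ineq1_le].
    replace (x / (a + 1)) with (x * (1 / (a + 1))) by (field; lra).
    apply Rplus_le_compat_l, Rmult_le_compat_l; assumption. }
  assert (Hsplit : Rpower (a + 1) x = Rpower a x * exp (x * (ln (a + 1) - ln a))).
  { unfold Rpower. rewrite <- exp_plus. f_equal. ring. }
  rewrite Hsplit.
  replace ((x + a + 1) * Rpower a x) with ((a + 1) * (Rpower a x * (1 + x / (a + 1))))
    by (field; lra).
  apply Rmult_le_compat_l; [lra|].
  apply Rmult_le_compat_l; [left; apply Rpower_pos|exact Hexp].
Qed.

Lemma gauss_seq_decreasing (x : R) : 0 <= x -> Un_decreasing (gauss_rgamma_seq x).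
Proof.
  intros Hx n. pose proof (gauss_seq_succ x n) as E.
  pose proof (rpower_succ_bound (INR n + 1) x ltac:(pose proof (pos_INR n); lra) Hx) as B.
  replace (INR n + 1 + 1) with (INR n + 2) in B by ring.
  pose proof (Rpower_pos (INR n + 2) x). pose proof (pos_INR n).
  pose proof (gauss_seq_nonneg x n Hx).
  apply (Rmult_le_reg_r ((INR n + 2) * Rpower (INR n + 2) x)); [nra|].
  rewrite E. apply Rmult_le_compat_l; lra.
Qed.

Lemma exists_nat_above (x : R) : exists N : nat, forall n, (N <= n)%nat -> x < INR n.
Proof.
  destruct (archimed (Rabs x)) as [H1 _].
  exists (Z.to_nat (up (Rabs x))). intros n Hn.
  apply le_INR in Hn. rewrite INR_IZR_INZ, Z2Nat.id in Hn.
  - pose proof (RRle_abs x). lra.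
  - apply le_IZR. pose proof (Rabs_pos x). lra.
Qed.

Lemma gauss_seq_cv_shift (x l : R) :
  Un_cv (gauss_rgamma_seq (x + 1)) l -> Un_cv (gauss_rgamma_seq x) (x * l).
Proof.
  intros H. apply is_lim_seq_Reals in H. apply is_lim_seq_Reals.
  assert (Hinv : is_lim_seq (fun n => / (INR n + (x + 2))) 0).
  { replace (Finite 0) with (Rbar_inv p_infty) by reflexivity.
    apply is_lim_seq_inv; [|discriminate].
    eapply is_lim_seq_plus; [apply is_lim_seq_INR|apply is_lim_seq_const|reflexivity]. }
  assert (Hfactor : is_lim_seq (fun n => 1 - (x + 1) * / (INR n + (x + 2))) 1).
  { replace (Finite 1) with (Finite (1 - (x + 1) * 0)) by (f_equal; ring).
    apply is_lim_seq_minus'; [apply is_lim_seq_const|].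
    exact (is_lim_seq_scal_l _ (x + 1) 0 Hinv). }
  replace (x * l) with (x * l * 1) by ring.
  eapply is_lim_seq_ext_loc;
    [|apply is_lim_seq_mult'; [exact (is_lim_seq_scal_l _ x l H)|exact Hfactor]].
  destruct (exists_nat_above (Rabs x)) as [N HN]. exists N. intros n Hn.
  specialize (HN n Hn). pose proof (Rabs_maj2 x).
  apply (Rmult_eq_reg_r (INR n + (x + 2))); [|lra].
  replace (gauss_rgamma_seq x n * (INR n + (x + 2)))
    with (gauss_rgamma_seq x n * (x + INR n + 2)) by ring.
  rewrite gauss_seq_shift. field. lra.
Qed.

(** The Gauss product converges everywhere: for x >= 0 it decreases to a
    nonnegative limit, and the shift lemma extends this to all x. *)
Lemma gauss_seq_cv (x : R) : exists l, Un_cv (gauss_rgamma_seq x) l.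
Proof.
  destruct (exists_nat_above (- x)) as [N HN]. specialize (HN N (Nat.le_refl _)).
  revert x HN. induction N as [|N IHN]; intros x HN.
  - simpl in HN. destruct (decreasing_cv _ (gauss_seq_decreasing x ltac:(lra))) as [l Hl].
    + exists 0. intros y [i ->]. unfold opp_seq.
      pose proof (gauss_seq_nonneg x i ltac:(lra)). lra.
    + now exists l.
  - rewrite S_INR in HN. destruct (IHN (x + 1)) as [l Hl]; [lra|].
    exists (x * l). now apply gauss_seq_cv_shift.
Qed.

Lemma rgamma_limit (x : R) : Un_cv (gauss_rgamma_seq x) (rgamma x).
Proof. unfold rgamma. apply epsilon_spec, gauss_seq_cv. Qed.

Lemma rgamma_rec (x : R) : rgamma x = x * rgamma (x + 1).
Proof.
  apply (UL_sequence (gauss_rgamma_seq x)); [apply rgamma_limit|].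
  apply gauss_seq_cv_shift, rgamma_limit.
Qed.

Lemma rgamma_nonpos_int (z : Z) : (z <= 0)%Z -> rgamma (IZR z) = 0.
Proof.
  intros Hz. replace z with (- Z.of_nat (Z.to_nat (- z)))%Z by lia.
  induction (Z.to_nat (- z)) as [|k IHk].
  - simpl. rewrite rgamma_rec. ring.
  - rewrite rgamma_rec, Nat2Z.inj_succ.
    replace (IZR (- Z.succ (Z.of_nat k)) + 1) with (IZR (- Z.of_nat k))
      by (rewrite !opp_IZR, succ_IZR; ring).
    rewrite IHk. ring.
Qed.

(** The rising factorial as a quotient of reciprocal Gamma values, including
    at t = 0, where both sides vanish. *)
Lemma rising_ratio (t beta : R) : rising t beta = rgamma t / rgamma (t + beta).
Proof.
  unfold rising. destruct (Req_EM_T t 0) as [->|]; [|reflexivity].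
  rewrite rgamma_rec. unfold Rdiv. ring.
Qed.

Lemma nabla_rising (t g : R) :
  (t - 1 + g <> 0 \/ rgamma t = 0) ->
  rising t g - rising (t - 1) g = g * rising t (g - 1).
Proof.
  intros H. rewrite !rising_ratio.
  replace (rgamma (t - 1)) with ((t - 1) * rgamma t)
    by (rewrite (rgamma_rec (t - 1)); do 2 f_equal; ring).
  replace (t + (g - 1)) with (t - 1 + g) by ring.
  replace (rgamma (t - 1 + g)) with ((t - 1 + g) * rgamma (t + g))
    by (rewrite (rgamma_rec (t - 1 + g)); do 2 f_equal; ring).
  destruct (Req_dec (rgamma (t + g)) 0) as [Z|Z].
  - rewrite Z, Rmult_0_r. unfold Rdiv. rewrite Rinv_0. ring.
  - destruct H as [H|H]; [field; auto|rewrite H; unfold Rdiv; ring].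
Qed.

Lemma nabla_pow_local (k : nat) (g1 g2 : R -> R) (t : R) :
  (forall i, (i <= k)%nat -> g1 (t - INR i) = g2 (t - INR i)) ->
  nabla_pow k g1 t = nabla_pow k g2 t.
Proof.
  revert t. induction k as [|k IHk]; intros t H.
  - specialize (H 0%nat (Nat.le_refl _)). simpl in *. now rewrite Rminus_0_r in H.
  - simpl. unfold nabla. rewrite (IHk t), (IHk (t - 1)); [reflexivity| |].
    + intros i Hi. replace (t - 1 - INR i) with (t - INR (S i)) by (rewrite S_INR; ring).
      apply H. lia.
    + intros i Hi. apply H. lia.
Qed.

Lemma nabla_pow_minus (k : nat) (g1 g2 : R -> R) (t : R) :
  nabla_pow k (fun s => g1 s - g2 s) t = nabla_pow k g1 t - nabla_pow k g2 t.
Proof. revert t. induction k; intros t; simpl; [reflexivity|]. unfold nabla. rewrite !IHk. ring. Qed.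

Lemma nabla_pow_plus (k : nat) (g1 g2 : R -> R) (t : R) :
  nabla_pow k (fun s => g1 s + g2 s) t = nabla_pow k g1 t + nabla_pow k g2 t.
Proof. revert t. induction k; intros t; simpl; [reflexivity|]. unfold nabla. rewrite !IHk. ring. Qed.

Lemma nabla_pow_scal (k : nat) (g : R -> R) (K t : R) :
  nabla_pow k (fun s => g s * K) t = nabla_pow k g t * K.
Proof. revert t. induction k; intros t; simpl; [reflexivity|]. unfold nabla. rewrite !IHk. ring. Qed.

Lemma nabla_pow_zero (k : nat) (t : R) : nabla_pow k (fun _ => 0) t = 0.
Proof. revert t. induction k; intros t; simpl; [reflexivity|]. unfold nabla. rewrite !IHk. ring. Qed.

Lemma nabla_pow_rsum (k n : nat) (H : nat -> R -> R) (t : R) :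
  nabla_pow k (fun s => rsum n (fun j => H j s)) t = rsum n (fun j => nabla_pow k (H j) t).
Proof.
  induction n as [|n IHn]; simpl; [apply nabla_pow_zero|].
  now rewrite nabla_pow_plus, IHn.
Qed.

Lemma nabla_pow_add (m k : nat) (g : R -> R) :
  nabla_pow m (nabla_pow k g) = nabla_pow (m + k) g.
Proof. induction m as [|m IHm]; simpl; [reflexivity|]. now rewrite IHm. Qed.

Lemma nabla_pow_nabla (k : nat) (g : R -> R) : nabla_pow k (nabla g) = nabla_pow (S k) g.
Proof. change (nabla g) with (nabla_pow 1 g). rewrite nabla_pow_add. f_equal. lia. Qed.

Lemma rsum_ext (n : nat) (F1 F2 : nat -> R) :
  (forall j, (1 <= j <= n)%nat -> F1 j = F2 j) -> rsum n F1 = rsum n F2.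
Proof.
  induction n as [|n IHn]; intros H; simpl; [reflexivity|].
  rewrite IHn, H; [reflexivity|lia|]. intros; apply H; lia.
Qed.

Lemma rsum_shift (n : nat) (F : nat -> R) : rsum (S n) F = F 1%nat + rsum n (fun j => F (S j)).
Proof.
  induction n as [|n IHn]; [simpl; ring|].
  change (rsum (S (S n)) F) with (rsum (S n) F + F (S (S n))). rewrite IHn. simpl. ring.
Qed.

Lemma rsum_minus (n : nat) (F1 F2 : nat -> R) :
  rsum n (fun j => F1 j - F2 j) = rsum n F1 - rsum n F2.
Proof. induction n as [|n IHn]; simpl; [ring|]. rewrite IHn. ring. Qed.

Lemma rsum_zero (n : nat) (F : nat -> R) : (forall j, (1 <= j <= n)%nat -> F j = 0) -> rsum n F = 0.
Proof.
  intros H. rewrite (rsum_ext n F (fun _ => 0)) by exact H. clear H.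
  induction n as [|n IHn]; simpl; [reflexivity|]. rewrite IHn. ring.
Qed.

Lemma rsum_by_parts (n : nat) (A g : nat -> R) :
  rsum (S n) (fun j => A j * (g j - g (pred j))) =
  rsum (S n) (fun j => A j * g j) - A 1%nat * g 0%nat - rsum n (fun j => A (S j) * g j).
Proof.
  rewrite (rsum_ext _ _ (fun j => A j * g j - A j * g (pred j))) by (intros; ring).
  rewrite rsum_minus, (rsum_shift n (fun j => A j * g (pred j))). simpl. ring.
Qed.

(** Non-integral orders avoid all poles of Γ in the power rule. *)
Definition not_integer (b : R) : Prop := forall w : Z, b <> IZR w.

Lemma not_integer_translate (b x : R) (w : Z) :
  not_integer b -> x = b + IZR w -> not_integer x.
Proof.
  intros Hb -> v Hv. apply (Hb (v - w)%Z). rewrite minus_IZR. lra.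
Qed.

Fixpoint falling_prod (b : R) (j : nat) : R :=
  match j with
  | O => 1
  | S j' => falling_prod b j' * (b - INR j')
  end.

Lemma nabla_pow_rising (c b : R) (j : nat) (z : Z) :
  not_integer b \/ (-1 < b /\ (Z.of_nat j + 1 <= z)%Z) ->
  nabla_pow j (fun s => rising (s - c) b) (c + IZR z) = falling_prod b j * rising (IZR z) (b - INR j).
Proof.
  revert z. induction j as [|j IHj]; intros z Hc.
  - simpl. replace (c + IZR z - c) with (IZR z) by ring. rewrite Rminus_0_r. ring.
  - simpl nabla_pow. unfold nabla.
    replace (c + IZR z - 1) with (c + IZR (z - 1)) by (rewrite minus_IZR; ring).
    rewrite !IHj by (destruct Hc as [Hc|[Hb Hz]]; [left; exact Hc|right; split; [exact Hb|lia]]).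
    rewrite minus_IZR, <- Rmult_minus_distr_l, nabla_rising.
    + simpl falling_prod. rewrite S_INR.
      replace (b - INR j - 1) with (b - (INR j + 1)) by ring. ring.
    + left. destruct Hc as [Hc|[Hb Hz]].
      * intros E. apply (Hc (1 - z + Z.of_nat j)%Z).
        rewrite plus_IZR, minus_IZR, <- INR_IZR_INZ. lra.
      * apply IZR_le in Hz. rewrite plus_IZR, <- INR_IZR_INZ, S_INR in Hz. lra.
Qed.

Lemma rgamma_falling_prod (b : R) (j : nat) :
  rgamma (b + 1) * falling_prod b j = rgamma (b + 1 - INR j).
Proof.
  induction j as [|j IHj]; simpl falling_prod; [rewrite Rmult_1_r, Rminus_0_r; reflexivity|].
  rewrite <- Rmult_assoc, IHj, S_INR.
  replace (b + 1 - (INR j + 1)) with (b - INR j) by ring.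
  rewrite (rgamma_rec (b - INR j)).
  replace (b - INR j + 1) with (b + 1 - INR j) by ring. ring.
Qed.

(** The normalized kernel (t-c)^{(g-1)}/Γ(g) under ∇^j becomes
    (t-c)^{(g-1-j)}/Γ(g-j): the boundary terms keep their shape. *)
Lemma nabla_pow_kernel (c g : R) (j : nat) (z : Z) :
  not_integer g \/ (0 < g /\ (Z.of_nat j + 1 <= z)%Z) ->
  nabla_pow j (fun s => rising (s - c) (g - 1)) (c + IZR z) * rgamma g =
  rising (IZR z) (g - 1 - INR j) * rgamma (g - INR j).
Proof.
  intros Hc. rewrite nabla_pow_rising.
  - pose proof (rgamma_falling_prod (g - 1) j) as E.
    replace (g - 1 + 1) with g in E by ring.
    rewrite <- E. ring.
  - destruct Hc as [Hc|[Hg Hz]]; [left|right; split; [lra|exact Hz]].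
    apply (not_integer_translate g _ (-1) Hc). ring.
Qed.

Lemma npoints_lattice (c : R) (z : Z) : npoints c (c + IZR z) = Z.to_nat z.
Proof.
  unfold npoints. replace (c + IZR z - c) with (IZR z) by ring.
  rewrite <- (Int_part_spec (IZR z) z); [reflexivity|lra].
Qed.

Lemma frac_sum_lattice (c gamma : R) (g : R -> R) (M : nat) :
  nabla_frac_sum c gamma g (c + INR M) =
  rgamma gamma * rsum M (fun j => rising (INR M + 1 - INR j) (gamma - 1) * g (c + INR j)).
Proof.
  unfold nabla_frac_sum. rewrite INR_IZR_INZ, npoints_lattice, Nat2Z.id, <- INR_IZR_INZ.
  f_equal. apply rsum_ext. intros j _. do 2 f_equal. ring.
Qed.

Lemma frac_sum_nabla (c gamma : R) (f : R -> R) (z : Z) :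
  nabla_frac_sum c gamma (nabla f) (c + IZR z) =
  nabla (nabla_frac_sum c gamma f) (c + IZR z) - rising (IZR z) (gamma - 1) * rgamma gamma * f c.
Proof.
  destruct (Z_le_gt_dec z 0) as [Hz|Hz].
  - unfold nabla at 2. unfold nabla_frac_sum.
    replace (c + IZR z - 1) with (c + IZR (z - 1)) by (rewrite minus_IZR; ring).
    rewrite !npoints_lattice, rising_ratio, rgamma_nonpos_int by exact Hz.
    replace (Z.to_nat z) with 0%nat by lia. replace (Z.to_nat (z - 1)) with 0%nat by lia.
    simpl. unfold Rdiv. ring.
  - replace z with (Z.of_nat (S (Z.to_nat (z - 1)))) by lia.
    set (M := Z.to_nat (z - 1)). rewrite <- INR_IZR_INZ.
    unfold nabla at 2. replace (c + INR (S M) - 1) with (c + INR M) by (rewrite S_INR; ring).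
    rewrite !frac_sum_lattice.
    set (A := fun j => rising (INR (S M) + 1 - INR j) (gamma - 1)).
    set (g := fun j => f (c + INR j)).
    rewrite (rsum_ext (S M) _ (fun j => A j * (g j - g (pred j)))).
    2:{ intros [|j] Hj; [lia|]. unfold A, g, nabla. simpl pred.
        do 3 f_equal. rewrite S_INR. ring. }
    change (rsum (S M) (fun j => rising (INR (S M) + 1 - INR j) (gamma - 1) * f (c + INR j)))
      with (rsum (S M) (fun j => A j * g j)).
    rewrite (rsum_ext M (fun j => rising (INR M + 1 - INR j) (gamma - 1) * f (c + INR j))
                        (fun j => A (S j) * g j)).
    2:{ intros j _. unfold A, g. do 2 f_equal. rewrite !S_INR. ring. }
    rewrite rsum_by_parts.
    replace (A 1%nat) with (rising (INR (S M)) (gamma - 1)) by (unfold A; f_equal; simpl; ring).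
    unfold g. simpl INR at 3. rewrite Rplus_0_r. ring.
Qed.

(** The correction term of the theorem:
    Σ_{k=0}^{p-1} (t-c)^{(α-p+k)} / Γ(α+k-p+1) · ∇^k f(c)  (with k = j - 1). *)
Definition init_correction (c alpha : R) (p : nat) (f : R -> R) (t : R) : R :=
  rsum p (fun j => rising (t - c) (alpha - INR p + INR (j - 1))
                   * rgamma (alpha + INR (j - 1) - INR p + 1)
                   * nabla_pow (j - 1) f c).

Lemma init_correction_succ (c alpha : R) (p : nat) (f : R -> R) (t : R) :
  init_correction c alpha (S p) f t =
  rising (t - c) (alpha - 1 - INR p) * rgamma (alpha - INR p) * f c
  + init_correction c alpha p (nabla f) t.
Proof.
  unfold init_correction. rewrite rsum_shift. f_equal.
  - simpl (1 - 1)%nat. rewrite S_INR. simpl nabla_pow. simpl INR. do 3 f_equal; ring.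
  - apply rsum_ext. intros [|j] Hj; [lia|].
    replace (S (S j) - 1)%nat with (S j) by lia. replace (S j - 1)%nat with j by lia.
    rewrite nabla_pow_nabla, !S_INR. do 3 f_equal; ring.
Qed.

(** When α is a non-positive integer every coefficient 1/Γ(α+k-p+1) is taken
    at a pole of Γ, so the correction vanishes. *)
Lemma init_correction_integer_order (c alpha : R) (n p : nat) (f : R -> R) (t : R) :
  alpha = - INR n -> init_correction c alpha p f t = 0.
Proof.
  intros ->. unfold init_correction. apply rsum_zero. intros j Hj.
  replace (- INR n + INR (j - 1) - INR p + 1)
    with (IZR (Z.of_nat j - Z.of_nat p - Z.of_nat n)).
  - rewrite rgamma_nonpos_int by lia. ring.
  - rewrite minus_INR by lia. rewrite !minus_IZR, <- !INR_IZR_INZ. simpl INR. ring.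
Qed.

(** The theorem for fractional sums (order γ > 0), by induction on p:
    summation by parts moves one ∇ outside and creates a boundary term,
    which the remaining p differences turn into the next correction term. *)
Lemma frac_sum_commute (c gamma : R) (p : nat) (f : R -> R) (z : Z) :
  0 < gamma -> not_integer gamma \/ (Z.of_nat p <= z)%Z ->
  nabla_frac_sum c gamma (nabla_pow p f) (c + IZR z) =
  nabla_pow p (nabla_frac_sum c gamma f) (c + IZR z) - init_correction c gamma p f (c + IZR z).
Proof.
  intros Hgamma. revert f. induction p as [|p IHp]; intros f Hc.
  - unfold init_correction. simpl. ring.
  - rewrite <- nabla_pow_nabla, IHp by (destruct Hc; [left|right; lia]; assumption).
    rewrite (nabla_pow_local p (nabla_frac_sum c gamma (nabla f))
      (fun s => nabla (nabla_frac_sum c gamma f) s - rising (s - c) (gamma - 1) * (rgamma gamma * f c))).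
    2:{ intros i _.
        replace (c + IZR z - INR i) with (c + IZR (z - Z.of_nat i))
          by (rewrite minus_IZR, <- INR_IZR_INZ; ring).
        rewrite frac_sum_nabla. replace (c + IZR (z - Z.of_nat i) - c) with (IZR (z - Z.of_nat i)) by ring.
        ring. }
    rewrite nabla_pow_minus, nabla_pow_scal, nabla_pow_nabla, init_correction_succ.
    rewrite <- Rmult_assoc, nabla_pow_kernel.
    2:{ destruct Hc as [Hc|Hc]; [left; exact Hc|right; split; [exact Hgamma|lia]]. }
    replace (c + IZR z - c) with (IZR z) by ring. ring.
Qed.

Lemma nabla_pow_init_correction (c nu : R) (n p : nat) (f : R -> R) (z : Z) :
  not_integer nu ->
  nabla_pow n (init_correction c nu p f) (c + IZR z) = init_correction c (nu - INR n) p f (c + IZR z).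
Proof.
  intros Hnu. unfold init_correction. rewrite nabla_pow_rsum. apply rsum_ext. intros j _.
  rewrite !nabla_pow_scal.
  set (g := nu + INR (j - 1) - INR p + 1).
  replace (nu - INR p + INR (j - 1)) with (g - 1) by (unfold g; ring).
  rewrite nabla_pow_kernel.
  - replace (c + IZR z - c) with (IZR z) by ring. unfold g. do 3 f_equal; ring.
  - left. apply (not_integer_translate nu g (Z.of_nat (j - 1) - Z.of_nat p + 1) Hnu).
    unfold g. rewrite plus_IZR, minus_IZR, <- !INR_IZR_INZ. ring.
Qed.

Lemma frac_diff_order_bounds (b : R) :
  0 < b ->
  INR (Z.to_nat (greatest_int_lt b + 1)) - 1 < b <= INR (Z.to_nat (greatest_int_lt b + 1)).
Proof.
  intros Hb. unfold greatest_int_lt. destruct (archimed (- b)) as [Hup1 Hup2].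
  assert (Hle : (up (- b) <= 0)%Z) by (apply Zlt_succ_le, lt_IZR; simpl; lra).
  rewrite INR_IZR_INZ, Z2Nat.id by lia. rewrite plus_IZR, opp_IZR. lra.
Qed.

Lemma not_integer_unit_interval (nu : R) : 0 < nu < 1 -> not_integer nu.
Proof.
  intros [H0 H1] w ->. apply lt_IZR in H0. apply lt_IZR in H1. lia.
Qed.

(** The theorem for ∇^n ∇_c^{-ν} with ν > 0 not an integer (at every lattice
    point): apply ∇^n to the fractional-sum identity, valid at all points
    t - i since ν is not an integer. *)
Lemma frac_diff_commute_nonint (c nu : R) (n p : nat) (f : R -> R) (z : Z) :
  0 < nu -> not_integer nu ->
  nabla_pow n (nabla_frac_sum c nu (nabla_pow p f)) (c + IZR z) =
  nabla_pow p (nabla_pow n (nabla_frac_sum c nu f)) (c + IZR z)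
  - init_correction c (nu - INR n) p f (c + IZR z).
Proof.
  intros Hnu Hni.
  rewrite (nabla_pow_local n _
    (fun s => nabla_pow p (nabla_frac_sum c nu f) s - init_correction c nu p f s)).
  - rewrite nabla_pow_minus, nabla_pow_init_correction by exact Hni.
    rewrite !nabla_pow_add, Nat.add_comm. reflexivity.
  - intros i _.
    replace (c + IZR z - INR i) with (c + IZR (z - Z.of_nat i))
      by (rewrite minus_IZR, <- INR_IZR_INZ; ring).
    apply frac_sum_commute; [exact Hnu|left; exact Hni].
Qed.

Lemma frac_diff_commute (c b : R) (p : nat) (f : R -> R) (z : Z) :
  0 < b ->
  nabla_frac_diff c b (nabla_pow p f) (c + IZR z) =
  nabla_pow p (nabla_frac_diff c b f) (c + IZR z) - init_correction c (- b) p f (c + IZR z).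
Proof.
  intros Hb. unfold nabla_frac_diff, nabla_frac_sum0. cbv zeta.
  pose proof (frac_diff_order_bounds b Hb) as Hn.
  set (n := Z.to_nat (greatest_int_lt b + 1)) in *.
  destruct (Req_EM_T (INR n - b) 0) as [Hint|Hfrac].
  - rewrite (init_correction_integer_order c (- b) n) by lra.
    rewrite !nabla_pow_add, Nat.add_comm. ring.
  - replace (- b) with ((INR n - b) - INR n) by ring.
    apply frac_diff_commute_nonint; [lra|apply not_integer_unit_interval; lra].
Qed.

Lemma nabla_left_commute (c alpha : R) (p : nat) (f : R -> R) (z : Z) :
  (Z.of_nat p <= z)%Z ->
  nabla_left c alpha (nabla_pow p f) (c + IZR z) =
  nabla_pow p (nabla_left c alpha f) (c + IZR z) - init_correction c alpha p f (c + IZR z).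
Proof.
  intros Hz. unfold nabla_left.
  destruct (Rlt_dec 0 alpha) as [Hpos|Hnpos]; [|destruct (Req_EM_T alpha 0) as [Hzero|Hneg]].
  - apply frac_sum_commute; [exact Hpos|right; exact Hz].
  - rewrite (init_correction_integer_order c alpha 0) by (simpl; lra). ring.
  - pose proof (frac_diff_commute c (- alpha) p f z ltac:(lra)) as H.
    rewrite Ropp_involutive in H. exact H.
Qed.

Theorem theorem2p11 (alpha : R) (p : nat) (a : R) (f : R -> R) :
  (1 <= p)%nat ->
  forall t : R, (exists m : nat, t = a + 2 * INR p - 1 + INR m) ->
    nabla_left (a + INR p - 1) alpha (nabla_pow p f) t =
    nabla_pow p (nabla_left (a + INR p - 1) alpha f) t
    - rsum p (fun j =>
        let k := INR (j - 1) in
        rising (t - (a + INR p - 1)) (alpha - INR p + k)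
        * rgamma (alpha + k - INR p + 1)
        * nabla_pow (j - 1) f (a + INR p - 1)).
Proof.
  intros _ t [m ->].
  replace (a + 2 * INR p - 1 + INR m) with ((a + INR p - 1) + IZR (Z.of_nat (p + m)))
    by (rewrite <- INR_IZR_INZ, plus_INR; ring).
  apply (nabla_left_commute (a + INR p - 1) alpha p f (Z.of_nat (p + m))). lia.
Qed.
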